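(* Let $n,p\ge1$ be integers and let $A=A^{p+1}_{n+1}$ with order $\le$ and multiplication $\odot$ as defined in the context. For all $a,b,c\in A$, if $b\le c$ then $a\odot b\le a\odot c$.
   Context: Order $\mathbb{Z}\times\mathbb{Z}$ lexicographically: $(m,r)\preccurlyeq(k,s)$ iff $m<k$, or $m=k$ and $r\le s$; addition/subtraction of pairs is componentwise, and $\min,\max$ of pairs refer to $\preccurlyeq$. For an integer $n\ge1$ let $L^\omega_{n+1}=\{(m,r)\in\mathbb{Z}^2:(0,0)\preccurlyeq(m,r)\preccurlyeq(n,0)\}$ with $x\ast y=\max\{(0,0),x+y-(n,0)\}$ and $x\to y=\min\{(n,0),(n,0)-x+y\}$. For an integer $p\ge1$ let $L_{p+1}=\{0,1,\dots,p\}$ with $\alpha\ast\beta=\max\{0,\alpha+\beta-p\}$. Define $$A=A^{p+1}_{n+1}=\{\langle(m,r),\alpha\rangle:(m,r)\in L^\omega_{n+1},\ \alpha\in\{0,p\}\}\cup\{\langle(m,r),\alpha\rangle:(0,0)\preccurlyeq(m,r)\preccurlyeq(n-1,0),\ 0<\alpha<p\}.$$ Order: $\langle(m,r),\alpha\rangle\le\langle(k,s),\beta\rangle$ iff one of: (o1) $\alpha\neq0$, $\alpha\le\beta$ and $(m,r)\preccurlyeq(k,s)$; (o2) $\alpha=\beta=0$ and $(k,s)\preccurlyeq(m,r)$; (o3) $\alpha=0$, $\beta\ne0$ and $(n-1,0)\preccurlyeq(m+k,r+s)$. Put $\bot=\langle(n,0),0\rangle$, $\top=\langle(n,0),p\rangle$.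 For $a=\langle(m,r),\alpha\rangle$, $b=\langle(k,s),\beta\rangle\in A$ define $a\odot b$ by: (P1) if $\alpha,\beta\ge1$ and $\alpha+\beta>p$: $a\odot b=\langle(m,r)\ast(k,s),\alpha+\beta-p\rangle$; (P2) if $\alpha,\beta\ge1$ and $\alpha+\beta\le p$: $a\odot b=\langle\min\{(n,0),(2n-(m+k+1),-(r+s))\},0\rangle$; (P3) if $\alpha\ge1$, $\beta=0$: $a\odot b=\langle(m,r)\to(k,s),0\rangle$, and if $\alpha=0$, $\beta\ge1$: $a\odot b=\langle(k,s)\to(m,r),0\rangle$; (P4) if $\alpha=\beta=0$: $a\odot b=\langle\min\{(n,0),(m+k+1,r+s)\},0\rangle$. *)

From Stdlib Require Import ZArith Bool Lia.
Open Scope Z_scope.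

Definition pair := (Z * Z)%type.

Definition lex_le (x y : pair) : bool :=
  let '(m, r) := x in let '(k, s) := y in
  (m <? k) || ((m =? k) && (r <=? s)).

Definition padd (x y : pair) : pair := (fst x + fst y, snd x + snd y).
Definition psub (x y : pair) : pair := (fst x - fst y, snd x - snd y).
Definition pmin (x y : pair) : pair := if lex_le x y then x else y.
Definition pmax (x y : pair) : pair := if lex_le x y then y else x.

Definition inLw (n : Z) (x : pair) : bool := lex_le (0, 0) x && lex_le x (n, 0).
Definition starw (n : Z) (x y : pair) : pair := pmax (0, 0) (psub (padd x y) (n, 0)).
Definition implw (n : Z) (x y : pair) : pair := pmin (n, 0) (padd (psub (n, 0) x) y).

(* Elements <(m,r), alpha> of A^{p+1}_{n+1} *)
Definition elt := (pair * Z)%type.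

Definition inA (n p : Z) (a : elt) : bool :=
  let '(x, al) := a in
  (inLw n x && ((al =? 0) || (al =? p)))
  || (lex_le (0, 0) x && lex_le x (n - 1, 0) && (0 <? al) && (al <? p)).

Definition leA (n p : Z) (a b : elt) : bool :=
  let '(x, al) := a in let '(y, be) := b in
  (negb (al =? 0) && (al <=? be) && lex_le x y)
  || ((al =? 0) && (be =? 0) && lex_le y x)
  || ((al =? 0) && negb (be =? 0) && lex_le (n - 1, 0) (padd x y)).

Definition odot (n p : Z) (a b : elt) : elt :=
  let '(x, al) := a in let '(y, be) := b in
  if (1 <=? al) && (1 <=? be) then
    if p <? al + be then (starw n x y, al + be - p)
    else (pmin (n, 0) (2 * n - (fst x + fst y + 1), - (snd x + snd y)), 0)
  else if (1 <=? al) && (be =? 0) then (implw n x y, 0)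
  else if (al =? 0) && (1 <=? be) then (implw n y x, 0)
  else (pmin (n, 0) (fst x + fst y + 1, snd x + snd y), 0).

(* Each ingredient of the product -- the operations of L^omega_{n+1} and the
   truncated sums in (P2) and (P4) -- is monotone or antitone in each argument,
   since Z x Z is a lexicographically ordered group and truncation by min/max
   preserves monotonicity.  This settles the cases where a (.) b and a (.) c are
   given by the same rule.  In the mixed cases the inequality to prove reduces,
   after cancelling the first factor, to the hypothesis y <= z of (o1) or
   (n-1,0) <= y + z of (o3), e.g. ((2n-1,0) - x - y) + (x + z - (n,0)) >= (n-1,0). *)

From Stdlib Require Import ZArith Bool Lia.
Open Scope Z_scope.

Lemma lex_leP (x y : pair) :
  lex_le x y = true <-> fst x < fst y \/ (fst x = fst y /\ snd x <= snd y).
Proof.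
  destruct x as [m r], y as [k s]; unfold lex_le; cbn.
  now rewrite orb_true_iff, andb_true_iff, Z.ltb_lt, Z.eqb_eq, Z.leb_le.
Qed.

Ltac lex_lia :=
  repeat match goal with x : pair |- _ => destruct x end;
  unfold padd, psub in *; rewrite ?lex_leP in *; cbn [fst snd] in *; lia.

Lemma lex_le_refl (x : pair) : lex_le x x = true.
Proof. lex_lia. Qed.

Lemma lex_le_trans (x y z : pair) :
  lex_le x y = true -> lex_le y z = true -> lex_le x z = true.
Proof. intros; lex_lia. Qed.

Lemma lex_le_total (x y : pair) : lex_le x y = false -> lex_le y x = true.
Proof. intros H%not_true_iff_false; lex_lia. Qed.

Lemma padd_le_mono_l (c x y : pair) :
  lex_le x y = true -> lex_le (padd c x) (padd c y) = true.
Proof. intros; lex_lia. Qed.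

Lemma pmin_mono_r (c x y : pair) :
  lex_le x y = true -> lex_le (pmin c x) (pmin c y) = true.
Proof.
  intros Hxy; unfold pmin.
  destruct (lex_le c x) eqn:Hcx, (lex_le c y) eqn:Hcy;
    eauto using lex_le_refl, lex_le_trans, lex_le_total.
Qed.

Lemma pmax_mono_r (c x y : pair) :
  lex_le x y = true -> lex_le (pmax c x) (pmax c y) = true.
Proof.
  intros Hxy; unfold pmax.
  destruct (lex_le c x) eqn:Hcx, (lex_le c y) eqn:Hcy;
    eauto using lex_le_refl, lex_le_trans, lex_le_total.
Qed.

Lemma le_pmax_l (c x : pair) : lex_le c (pmax c x) = true.
Proof. unfold pmax; destruct (lex_le c x) eqn:H; auto using lex_le_refl. Qed.

Lemma le_pmax_r (c x : pair) : lex_le x (pmax c x) = true.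
Proof. unfold pmax; destruct (lex_le c x) eqn:H; auto using lex_le_refl, lex_le_total. Qed.

Lemma le_padd_pmin (t c x w : pair) :
  lex_le t (padd c w) = true -> lex_le t (padd x w) = true ->
  lex_le t (padd (pmin c x) w) = true.
Proof. unfold pmin; now destruct (lex_le c x). Qed.

Lemma le_padd_pmax (t c d x : pair) :
  lex_le t (padd c d) = true \/ lex_le t (padd c x) = true ->
  lex_le t (padd c (pmax d x)) = true.
Proof.
  intros [H | H]; eapply lex_le_trans; eauto using padd_le_mono_l, le_pmax_l, le_pmax_r.
Qed.

Definition odot_P2 (n : Z) (x y : pair) : pair :=
  pmin (n, 0) (2 * n - (fst x + fst y + 1), - (snd x + snd y)).
Definition odot_P4 (n : Z) (x y : pair) : pair :=
  pmin (n, 0) (fst x + fst y + 1, snd x + snd y).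

Lemma starw_mono_r (n : Z) (x y z : pair) :
  lex_le y z = true -> lex_le (starw n x y) (starw n x z) = true.
Proof. intros; apply pmax_mono_r; lex_lia. Qed.

Lemma implw_mono_r (n : Z) (x y z : pair) :
  lex_le y z = true -> lex_le (implw n x y) (implw n x z) = true.
Proof. intros; apply pmin_mono_r; lex_lia. Qed.

Lemma implw_antitone_l (n : Z) (x y z : pair) :
  lex_le y z = true -> lex_le (implw n z x) (implw n y x) = true.
Proof. intros; apply pmin_mono_r; lex_lia. Qed.

Lemma odot_P2_antitone_r (n : Z) (x y z : pair) :
  lex_le y z = true -> lex_le (odot_P2 n x z) (odot_P2 n x y) = true.
Proof. intros; apply pmin_mono_r; lex_lia. Qed.

Lemma odot_P4_mono_r (n : Z) (x y z : pair) :
  lex_le y z = true -> lex_le (odot_P4 n x y) (odot_P4 n x z) = true.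
Proof. intros; apply pmin_mono_r; lex_lia. Qed.

Lemma odot_P2_padd_starw (n : Z) (x y z : pair) : lex_le y z = true ->
  lex_le (n - 1, 0) (padd (odot_P2 n x y) (starw n x z)) = true.
Proof. intros; apply le_padd_pmin; apply le_padd_pmax; [left | right]; lex_lia. Qed.

Lemma implw_padd_starw (n : Z) (x y z : pair) : lex_le (n - 1, 0) (padd y z) = true ->
  lex_le (n - 1, 0) (padd (implw n x y) (starw n x z)) = true.
Proof. intros; apply le_padd_pmin; apply le_padd_pmax; [left | right]; lex_lia. Qed.

Lemma odot_P2_le_implw (n : Z) (x y z : pair) : lex_le (n - 1, 0) (padd y z) = true ->
  lex_le (odot_P2 n x z) (implw n x y) = true.
Proof. intros; apply pmin_mono_r; lex_lia. Qed.

Lemma implw_le_odot_P4 (n : Z) (x y z : pair) : lex_le (n - 1, 0) (padd y z) = true ->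
  lex_le (implw n z x) (odot_P4 n x y) = true.
Proof. intros; apply pmin_mono_r; lex_lia. Qed.

Section Computation.
Variables (n p : Z) (x y : pair) (al be : Z).

Lemma odotE_P1 : 1 <= al -> 1 <= be -> p < al + be ->
  odot n p (x, al) (y, be) = (starw n x y, al + be - p).
Proof.
  intros Hal Hbe Hp; unfold odot.
  apply Z.leb_le in Hal, Hbe; apply Z.ltb_lt in Hp.
  now rewrite Hal, Hbe, Hp.
Qed.

Lemma odotE_P2 : 1 <= al -> 1 <= be -> al + be <= p ->
  odot n p (x, al) (y, be) = (odot_P2 n x y, 0).
Proof.
  intros Hal Hbe Hp; unfold odot.
  apply Z.leb_le in Hal, Hbe; apply Z.ltb_ge in Hp.
  now rewrite Hal, Hbe, Hp.
Qed.

Lemma odotE_P3l : 1 <= al -> odot n p (x, al) (y, 0) = (implw n x y, 0).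
Proof. intros Hal; unfold odot; apply Z.leb_le in Hal; now rewrite Hal. Qed.

Lemma odotE_P3r : 1 <= be -> odot n p (x, 0) (y, be) = (implw n y x, 0).
Proof. intros Hbe; unfold odot; apply Z.leb_le in Hbe; now rewrite Hbe. Qed.

Lemma odotE_P4 : odot n p (x, 0) (y, 0) = (odot_P4 n x y, 0).
Proof. reflexivity. Qed.

Lemma leA_zero_zero : leA n p (x, 0) (y, 0) = lex_le y x.
Proof. unfold leA; now destruct (lex_le y x). Qed.

Lemma leA_zero_nonzero : be <> 0 ->
  leA n p (x, 0) (y, be) = lex_le (n - 1, 0) (padd x y).
Proof.
  intros Hbe; unfold leA; apply Z.eqb_neq in Hbe; rewrite Hbe.
  now destruct (lex_le (n - 1, 0) (padd x y)).
Qed.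

Lemma leA_nonzero_l : al <> 0 -> leA n p (x, al) (y, be) = (al <=? be) && lex_le x y.
Proof.
  intros Hal; unfold leA; apply Z.eqb_neq in Hal; rewrite Hal.
  now destruct (al <=? be), (lex_le x y).
Qed.

Lemma leA_inv : leA n p (x, al) (y, be) = true ->
  (al <> 0 /\ al <= be /\ lex_le x y = true) \/
  (al = 0 /\ be = 0 /\ lex_le y x = true) \/
  (al = 0 /\ be <> 0 /\ lex_le (n - 1, 0) (padd x y) = true).
Proof.
  unfold leA.
  rewrite !orb_true_iff, !andb_true_iff, !negb_true_iff, !Z.eqb_neq, !Z.eqb_eq, Z.leb_le.
  tauto.
Qed.

Lemma inA_label_nonneg : 0 <= p -> inA n p (x, al) = true -> 0 <= al.
Proof.
  intros Hp; unfold inA.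
  repeat rewrite ?orb_true_iff, ?andb_true_iff.
  rewrite !Z.eqb_eq, !Z.ltb_lt; lia.
Qed.

End Computation.

Section Monotonicity.
Variables (n p : Z) (x y z : pair) (al : Z).
Hypothesis (Hal : 0 <= al).

Lemma odot_mono_o1 (be ga : Z) : 1 <= be -> be <= ga -> lex_le y z = true ->
  leA n p (odot n p (x, al) (y, be)) (odot n p (x, al) (z, ga)) = true.
Proof.
  intros Hbe Hbg Hyz.
  destruct (Z.eq_dec al 0) as [-> | Hal0].
  { rewrite !odotE_P3r, leA_zero_zero by lia; now apply implw_antitone_l. }
  destruct (Z.lt_ge_cases p (al + be)), (Z.lt_ge_cases p (al + ga)); try lia.
  - rewrite !odotE_P1, leA_nonzero_l by lia.
    apply andb_true_intro; split; [apply Z.leb_le; lia | now apply starw_mono_r].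
  - rewrite odotE_P2, odotE_P1, leA_zero_nonzero by lia.
    now apply odot_P2_padd_starw.
  - rewrite !odotE_P2, leA_zero_zero by lia; now apply odot_P2_antitone_r.
Qed.

Lemma odot_mono_o2 : lex_le z y = true ->
  leA n p (odot n p (x, al) (y, 0)) (odot n p (x, al) (z, 0)) = true.
Proof.
  intros Hzy; destruct (Z.eq_dec al 0) as [-> | Hal0].
  - rewrite !odotE_P4, leA_zero_zero; now apply odot_P4_mono_r.
  - rewrite !odotE_P3l, leA_zero_zero by lia; now apply implw_mono_r.
Qed.

Lemma odot_mono_o3 (ga : Z) : 1 <= ga -> lex_le (n - 1, 0) (padd y z) = true ->
  leA n p (odot n p (x, al) (y, 0)) (odot n p (x, al) (z, ga)) = true.
Proof.
  intros Hga Hyz; destruct (Z.eq_dec al 0) as [-> | Hal0].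
  { rewrite odotE_P4, odotE_P3r, leA_zero_zero by lia; now apply implw_le_odot_P4. }
  rewrite odotE_P3l by lia.
  destruct (Z.lt_ge_cases p (al + ga)).
  - rewrite odotE_P1, leA_zero_nonzero by lia; now apply implw_padd_starw.
  - rewrite odotE_P2, leA_zero_zero by lia; now apply odot_P2_le_implw.
Qed.

End Monotonicity.

Theorem lemma2p2 (n p : Z) (hn : 1 <= n) (hp : 1 <= p) (a b c : elt) :
  inA n p a = true -> inA n p b = true -> inA n p c = true ->
  leA n p b c = true -> leA n p (odot n p a b) (odot n p a c) = true.
Proof.
  destruct a as [x al], b as [y be], c as [z ga].
  intros Ha Hb Hc Hbc.
  apply inA_label_nonneg in Ha, Hb, Hc; try lia.
  apply leA_inv in Hbc as [(Hbe & Hbg & Hyz) | [(-> & -> & Hzy) | (-> & Hga & Hyz)]].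
  - apply odot_mono_o1; auto; lia.
  - now apply odot_mono_o2.
  - apply odot_mono_o3; auto; lia.
Qed.
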